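(* Let $m\in\mathbb N$ and $\lambda\in X^+_{m+\infty}$, and let $\lambda^\natural\in X^+_{m|\infty}$ be as defined below. Then: (1) the degree of J-atypicality of $\lambda$ equals the degree of atypicality of $\lambda^\natural$; (2) $\lambda$ is J-typical if and only if $\lambda^\natural$ is typical.
   Context: $I(m|\infty)=\{-m,\dots,-1\}\cup\{1,2,\dots\}$. $X^+_{m+\infty}$ is the set of $\lambda=\sum_{i\in I(m|\infty)}\lambda_i\delta'_i$, $\lambda_i\in\mathbb Z$, with $\lambda_{-m}\ge\cdots\ge\lambda_{-1}$, $\lambda_1\ge\lambda_2\ge\cdots$ and $\lambda_i=0$ for $i\gg0$ (so $(\lambda_1,\lambda_2,\dots)$ is a partition); $X^+_{m|\infty}$ is defined likewise with symbols $\delta_i$. For $\lambda\in X^+_{m+\infty}$, let $(\lambda'_1,\lambda'_2,\dots)$ be the conjugate partition of $(\lambda_1,\lambda_2,\dots)$ and $\lambda^\natural=\sum_{i=-m}^{-1}\lambda_i\delta_i+\sum_{j\ge1}\lambda'_j\delta_j$. Super side: $(\delta_i|\delta_j)=-\mathrm{sgn}(i)\delta_{ij}$, $\rho=-\sum_i i\delta_i$. The degree of atypicality of $\mu\in X^+_{m|\infty}$ is the number of $i\in\{-m,\dots,-1\}$ such that $(\mu+\rho|\delta_i-\delta_j)=0$ for some $j>0$; $\mu$ is typical if it is $0$. Reductive side: $(\delta'_i|\delta'_j)_c=\delta_{ij}$, $\rho_c=-\sum_{i<0}i\delta'_i+\sum_{j>0}(1-j)\delta'_j$, and $f_\lambda:I(m|\infty)\to\mathbb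 Z$, $f_\lambda(i)=(\lambda+\rho_c|\delta'_i)_c$. For $f:I(m|\infty)\to\mathbb Z$ injective on negative indices and on positive indices, a pair $(i|j)$ with $i<0<j$ is an atypical pair if $f(i)>f(j)$, $f(i)\ne f(k)$ for all $k>0$ and $f(l)\ne f(j)$ for all $l<0$; its distance is $f(i)-f(j)$. Two pairs are disjoint if they share neither first nor second entry. Recursively for $k\ge1$ let $\Sigma^k_f$ be the set of atypical pairs of distance $k$ disjoint from all pairs in $\Sigma^1_f\cup\cdots\cup\Sigma^{k-1}_f$, and $\Sigma^+_f=\bigcup_k\Sigma^k_f$. The degree of J-atypicality of $\lambda$ is $|\Sigma^+_{f_\lambda}|$. The Bruhat ordering on functions $I(m|\infty)\to\mathbb Z$ is the transitive closure of $f<f\cdot\tau_{ij}$ for $i<j$ with $f(i)<f(j)$ ($(f\cdot\tau)(k)=f(\tau(k))$, $\tau_{ij}$ a transposition); $\lambda$ is J-typical if $f_\lambda$ is minimal in this ordering among $\{f_\mu:\mu\in X^+_{m+\infty}\}$. *)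

From Stdlib Require Import Relations.
From mathcomp Require Import all_boot all_order all_algebra.
Set Implicit Arguments. Unset Strict Implicit. Unset Printing Implicit Defensive.
Import Order.TTheory GRing.Theory Num.Theory.
Local Open Scope ring_scope.

Definition negI (m : nat) (i : int) : bool := (- (m%:Z) <= i) && (i <= -1).
Definition posI (i : int) : bool := 1 <= i.
Definition inI (m : nat) (i : int) : bool := negI m i || posI i.

(* A weight  sum_i lambda_i delta_i  is encoded as a pair (a, p):
   a = [:: lambda_{-m}; ...; lambda_{-1}]  and  p = [:: lambda_1; lambda_2; ...]
   (the coefficients lambda_j, j > size p, being 0).  The same encoding is used
   for X^+_{m+oo} (symbols delta'_i) and X^+_{m|oo} (symbols delta_i). *)
Definition wt := (seq int * seq nat)%type.

Definition wval (m : nat) (w : wt) (i : int) : int :=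
  if i < 0 then nth 0 w.1 (m - absz i)%N else (nth 0%N w.2 (absz i).-1)%:Z.

Definition dominant (m : nat) (w : wt) : bool :=
  [&& size w.1 == m, sorted (fun x y : int => y <= x) w.1 & sorted geq w.2].

Definition conj_part (p : seq nat) : seq nat :=
  [seq count (fun x => (j <= x)%N) p | j <- iota 1 (foldr maxn 0%N p)].

Definition natural (w : wt) : wt := (w.1, conj_part w.2).

Definition card_is (T : eqType) (P : T -> Prop) (n : nat) : Prop :=
  exists s : seq T, [/\ uniq s, (forall x, x \in s <-> P x) & size s = n].

(* rho = - sum_i i delta_i (coefficient at delta_i) *)
Definition rho_s (i : int) : int := - i.
(* (x | delta_i) where x = sum_k x_k delta_k and (delta_i|delta_j) = -sgn(i) delta_ij *)
Definition form_delta (x : int -> int) (i : int) : int := - sgz i * x i.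

Definition atyp_set (m : nat) (mu : wt) (i : int) : Prop :=
  negI m i /\ exists j : int, posI j /\
    form_delta (fun k => wval m mu k + rho_s k) i
    - form_delta (fun k => wval m mu k + rho_s k) j = 0.

Definition typical (m : nat) (mu : wt) : Prop := card_is (atyp_set m mu) 0.

(* rho_c = - sum_{i<0} i delta'_i + sum_{j>0} (1-j) delta'_j *)
Definition rho_c (i : int) : int := if i < 0 then - i else 1 - i.
(* f_lambda(i) = (lambda + rho_c | delta'_i)_c *)
Definition f_ (m : nat) (w : wt) (i : int) : int := wval m w i + rho_c i.

Definition atyp_pair (m : nat) (f : int -> int) (p : int * int) : Prop :=
  [/\ negI m p.1, posI p.2, f p.2 < f p.1,
      (forall k, posI k -> f p.1 != f k) &
      (forall l, negI m l -> f l != f p.2)].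

Definition dist (f : int -> int) (p : int * int) : int := f p.1 - f p.2.

Definition pdisjoint (p q : int * int) : Prop := p.1 != q.1 /\ p.2 != q.2.

(* SigmaUpto m f n = Sigma^1_f u ... u Sigma^n_f *)
Fixpoint SigmaUpto (m : nat) (f : int -> int) (n : nat) : int * int -> Prop :=
  match n with
  | 0 => fun _ => False
  | n'.+1 => fun p => SigmaUpto m f n' p \/
      (atyp_pair m f p /\ dist f p = n'.+1%:Z /\
       forall q, SigmaUpto m f n' q -> pdisjoint p q)
  end.

Definition SigmaPlus (m : nat) (f : int -> int) (p : int * int) : Prop :=
  exists n, SigmaUpto m f n p.

Definition tau (i j k : int) : int := if k == i then j else if k == j then i else k.

Definition bruhat_step (m : nat) (f g : int -> int) : Prop :=
  exists i j, [/\ inI m i, inI m j, i < j, f i < f j &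
                 forall k, inI m k -> g k = f (tau i j k)].

Definition bruhat_lt (m : nat) : relation (int -> int) := clos_trans _ (bruhat_step m).

Definition J_typical (m : nat) (lam : wt) : Prop :=
  ~ exists mu : wt, dominant m mu /\ bruhat_lt m (f_ m mu) (f_ m lam).

(* Write f for [f_ m lam].  For dominant lam, f is strictly decreasing on the
   negative and on the positive indices, and f j = 1 - j for large j.  The
   values f (n + 1) = lam_(n+1) - n (n >= 0) and J - lam'_J (J > 0) partition
   Z, so i < 0 is atypical for lam^natural exactly when f i is not a value of
   f at a positive index.

   (1) A pair of Sigma^+ is determined by its first entry, and every atypical
   i is a first entry: otherwise, paired with m + 1 far away positive indices,
   it would force m + 1 distinct second entries into Sigma^+, which has at most
   m pairs.

   (2) Let i be the largest atypical index, j the first positive index with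
   f j < f i and r maximal with f (i + k + 1) = f (j + k) for k < r.
   Exchanging the blocks [i, i + r] and [j, j + r] gives the function of a
   dominant weight below f in the Bruhat order.  Conversely, going up in the
   Bruhat order keeps the multiset of values on a large window, strictly
   decreases sum_k k f(k) there, and can only raise the values at negative
   indices; if every f i (i < 0) is a value at a positive index, these values
   cannot change, so a dominant function below f would coincide with f on the
   window. *)

From Stdlib Require Import Relations Classical.
From mathcomp Require Import all_boot all_order all_algebra zify.
Set Implicit Arguments. Unset Strict Implicit. Unset Printing Implicit Defensive.
Import Order.TTheory GRing.Theory Num.Theory.
Local Open Scope ring_scope.

Ltac lia_idx := unfold inI, negI, posI in *; lia.

Lemma lt_of_succ_lt (f : int -> int) (x y : int) :
  (forall z, x <= z -> z < y -> f (z + 1) < f z) -> x < y -> f y < f x.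
Proof.
move=> step lt_xy; have [n ey] : exists n : nat, y = x + n.+1%:Z.
  by exists (absz (y - x)).-1; lia.
subst y; elim: n step {lt_xy} => [|n IH] step; first by apply: step; lia.
have -> : x + n.+2%:Z = x + n.+1%:Z + 1 by lia.
by apply: lt_trans (IH _) => [|z hz1 hz2]; apply: step; lia.
Qed.

(* On I(m|oo) these are exactly the [f_ m mu], mu dominant with at most [S]
   nonzero parts. *)
Definition dominant_fun (m S : nat) (f : int -> int) : Prop :=
  [/\ (forall x, negI m x -> negI m (x + 1) -> f (x + 1) < f x),
      (forall x, 1 <= x -> f (x + 1) < f x),
      (forall x, 1 <= x -> 1 - x <= f x) &
      (forall x, S%:Z < x -> f x = 1 - x)].

Section DominantFun.
Variables (m S : nat) (f : int -> int).
Hypothesis df : dominant_fun m S f.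

Lemma dominant_fun_neg_lt x y : negI m x -> negI m y -> x < y -> f y < f x.
Proof.
move=> hx hy; have [step _ _ _] := df; apply: lt_of_succ_lt => z hz1 hz2.
by apply: step; lia_idx.
Qed.

Lemma dominant_fun_pos_lt x y : 1 <= x -> x < y -> f y < f x.
Proof.
by move=> hx; have [_ step _ _] := df; apply: lt_of_succ_lt => z hz _; apply: step; lia.
Qed.

Lemma dominant_fun_neg_le x y : negI m x -> negI m y -> x <= y -> f y <= f x.
Proof.
move=> hx hy; rewrite le_eqVlt => /orP[/eqP->//|lt_xy].
exact/ltW/dominant_fun_neg_lt.
Qed.

Lemma dominant_fun_pos_le x y : 1 <= x -> x <= y -> f y <= f x.
Proof.
move=> hx; rewrite le_eqVlt => /orP[/eqP->//|lt_xy].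
exact/ltW/dominant_fun_pos_lt.
Qed.

Lemma dominant_fun_pos_inj x y : 1 <= x -> 1 <= y -> f x = f y -> x = y.
Proof.
move=> hx hy e; case: (ltgtP x y) => // [lt_xy|lt_yx].
  by have := dominant_fun_pos_lt hx lt_xy; rewrite e ltxx.
by have := dominant_fun_pos_lt hy lt_yx; rewrite e ltxx.
Qed.

End DominantFun.

Lemma f_negE m (lam : wt) (K : nat) : (K < m)%N ->
  f_ m lam (K%:Z - m%:Z) = nth 0 lam.1 K - (K%:Z - m%:Z).
Proof.
move=> hK; rewrite /f_ /wval /rho_c.
have -> : (K%:Z - m%:Z < 0) = true by lia.
by have -> : (m - `|K%:Z - m%:Z|)%N = K by lia.
Qed.

Lemma f_posE m (lam : wt) (n : nat) :
  f_ m lam n.+1%:Z = (nth 0%N lam.2 n)%:Z - n%:Z.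
Proof. by rewrite /f_ /wval /rho_c /=; lia. Qed.

Lemma sorted_geq_nth (p : seq nat) i j :
  sorted geq p -> (i <= j)%N -> (nth 0 p j <= nth 0 p i)%N.
Proof.
move=> sp le_ij; case: (ltnP j (size p)) => hj; last by rewrite nth_default.
apply: (sorted_leq_nth (rev_trans leq_trans) leqnn) => //.
by rewrite inE (leq_ltn_trans le_ij hj).
Qed.

Lemma sorted_ger_nth (a : seq int) i j : sorted >=%R a ->
  (j < size a)%N -> (i <= j)%N -> nth 0 a j <= nth 0 a i.
Proof.
move=> sa hj le_ij.
apply: (sorted_leq_nth (rev_trans le_trans) lexx) => //.
by rewrite inE (leq_ltn_trans le_ij hj).
Qed.

Lemma sorted_map_iota (T : Type) (r : rel T) (F : nat -> T) a n :
  (forall k, (a <= k)%N -> (k.+1 < a + n)%N -> r (F k) (F k.+1)) ->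
  sorted r [seq F k | k <- iota a n].
Proof.
elim: n a => [//|[//|n] IH] a step.
rewrite [sorted _ _]/= step ?leqnn //; last by lia.
by apply: (IH a.+1) => k hk1 hk2; apply: step; lia.
Qed.

Lemma f_dominant_fun m lam : dominant m lam -> dominant_fun m (size lam.2) (f_ m lam).
Proof.
case/and3P => /eqP size_a sa sp; split.
- move=> x hx hx1; have [K [hK ->]] : exists K : nat, (K.+1 < m)%N /\ x = K%:Z - m%:Z.
    by exists (absz (x + m%:Z)); split; lia_idx.
  have -> : K%:Z - m%:Z + 1 = K.+1%:Z - m%:Z by lia.
  rewrite !f_negE; try lia.
  by have := sorted_ger_nth sa (_ : (K.+1 < size lam.1)%N) (leqnSn K); rewrite size_a; lia.
- move=> x hx; have [n ->] : exists n : nat, x = n.+1%:Z by exists (absz x).-1; lia.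
  have -> : n.+1%:Z + 1 = n.+2%:Z by lia.
  by rewrite !f_posE; have := sorted_geq_nth sp (leqnSn n); lia.
- move=> x hx; have [n ->] : exists n : nat, x = n.+1%:Z by exists (absz x).-1; lia.
  by rewrite f_posE; lia.
- move=> x hx; have [n ex] : exists n : nat, x = n.+1%:Z by exists (absz x).-1; lia.
  by subst x; rewrite f_posE nth_default; lia.
Qed.

Lemma dominant_fun_weight m S g : dominant_fun m S g ->
  exists mu, dominant m mu /\ forall x, inI m x -> f_ m mu x = g x.
Proof.
case=> neg_step pos_step pos_lb pos_tail.
exists ([seq g (K%:Z - m%:Z) + (K%:Z - m%:Z) | K <- iota 0 m],
        [seq absz (g n.+1%:Z + n%:Z) | n <- iota 0 S]); split.
  apply/and3P; split; first by rewrite size_map size_iota.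
    apply: sorted_map_iota => k _ hk.
    have := neg_step (k%:Z - m%:Z) (_ : _) (_ : _).
    have -> : k%:Z - m%:Z + 1 = k.+1%:Z - m%:Z by lia.
    by move=> /(_ _ _); lia_idx.
  apply: sorted_map_iota => k _ _.
  have := pos_step k.+1%:Z isT; have -> : k.+1%:Z + 1 = k.+2%:Z by lia.
  by have := pos_lb k.+1%:Z isT; have := pos_lb k.+2%:Z isT; rewrite /geq; lia.
move=> x; rewrite /inI /negI /posI => /orP[hx|hx].
  have [K [hK ->]] : exists K : nat, (K < m)%N /\ x = K%:Z - m%:Z.
    by exists (absz (x + m%:Z)); split; lia.
  by rewrite f_negE //= (nth_map 0%N) ?size_iota // nth_iota // add0n; lia.
have [n ->] : exists n : nat, x = n.+1%:Z by exists (absz x).-1; lia.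
rewrite f_posE /=; case: (ltnP n S) => hn.
  by rewrite (nth_map 0%N) ?size_iota // nth_iota // add0n; have := pos_lb n.+1%:Z isT; lia.
by rewrite nth_default ?size_map ?size_iota // pos_tail; lia.
Qed.

Lemma nth_conj_part p n : nth 0%N (conj_part p) n = count (fun x => n < x)%N p.
Proof.
rewrite /conj_part; case: (ltnP n (foldr maxn 0 p)) => hn.
  by rewrite (nth_map 0%N) ?size_iota // nth_iota // add1n.
rewrite nth_default ?size_map ?size_iota //; apply/esym/eqP.
rewrite -leqn0 leqNgt -has_count; apply/hasP => -[x px lt_nx].
have : (x <= foldr maxn 0 p)%N.
  by elim: p px {hn} => //= a p IH; rewrite inE => /orP[/eqP->|/IH]; lia.
by rewrite leqNgt (leq_ltn_trans hn lt_nx).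
Qed.

Lemma ltn_count_leq_nth (p : seq nat) n J : sorted geq p -> (0 < J)%N ->
  (n < count (fun x => J <= x) p)%N = (J <= nth 0 p n)%N.
Proof.
elim: p n => [|a p IH] n sp hJ /=; first by rewrite nth_nil; lia.
have sp' : sorted geq p by case: p sp {IH} => //= b p /andP[].
have le_pa : all (fun x => x <= a)%N p.
  by move: sp; rewrite /= (path_sortedE (rev_trans leq_trans)) => /andP[].
case: (leqP J a) => hJa; first by case: n => [|n] /=; rewrite ?hJa // add1n ltnS IH.
have -> : count (fun x => J <= x)%N p = 0%N.
  apply/eqP; rewrite -leqn0 leqNgt -has_count; apply/hasP => -[x px].
  by have := allP le_pa x px; lia.
case: n => [|n] /=; first by lia.
case: (ltnP n (size p)) => hn; last by rewrite nth_default //; lia.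
by rewrite addn0 ltn0 leqNgt (leq_ltn_trans (allP le_pa _ (mem_nth 0%N hn)) hJa).
Qed.

(* [count (fun x => J <= x) p] is the conjugate part p'_J: the numbers p_n - n
   (n >= 0) and J - p'_J (J > 0) partition Z. *)
Lemma conj_part_hooks_disjoint (p : seq nat) n J : sorted geq p -> (0 < J)%N ->
  (nth 0%N p n)%:Z - n%:Z != J%:Z - (count (fun x => J <= x)%N p)%:Z.
Proof.
move=> sp hJ; have := ltn_count_leq_nth n sp hJ.
by case: (leqP J (nth 0%N p n)); lia.
Qed.

Lemma conj_part_hooks_cover (p : seq nat) (x : int) : sorted geq p ->
  (forall n, (nth 0%N p n)%:Z - n%:Z != x) ->
  exists2 J, (0 < J)%N & x = J%:Z - (count (fun y => J <= y)%N p)%:Z.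
Proof.
move=> sp hx.
have ex : exists n, (nth 0%N p n)%:Z - n%:Z < x.
  by exists (size p + absz x + 1)%N; rewrite nth_default; lia.
case: (ex_minnP ex) => n0 lt_n0 n0_min.
have [J eJ] : exists J : nat, J%:Z = x + n0%:Z by exists (absz (x + n0%:Z)); lia.
have hJ : (0 < J)%N by lia.
exists J => //.
have := ltn_count_leq_nth n0 sp hJ.
case: n0 lt_n0 n0_min eJ => [|n] lt_n0 n0_min eJ; first by lia.
have := ltn_count_leq_nth n sp hJ; have := hx n.
have : ~~ ((nth 0%N p n)%:Z - n%:Z < x) by apply/negP => /n0_min; lia.
lia.
Qed.

Definition atyp_index (m : nat) (f : int -> int) (i : int) : Prop :=
  negI m i /\ forall k, posI k -> f i != f k.

Lemma atyp_setE m lam i : dominant m lam ->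
  atyp_set m (natural lam) i <-> atyp_index m (f_ m lam) i.
Proof.
case/and3P => _ _ sp; set X := fun k => wval m (natural lam) k + rho_s k.
have X_neg : negI m i -> form_delta X i = f_ m lam i.
  move=> hi; have hi0 : i < 0 by lia_idx.
  by rewrite /form_delta /X /f_ /rho_c /rho_s /wval /= ltr0_sgz // hi0; lia.
have X_pos J : form_delta X J.+1%:Z = J.+1%:Z - (count (fun y => J.+1 <= y)%N lam.2)%:Z.
  by rewrite /form_delta /X /rho_s /wval gtr0_sgz //= nth_conj_part; lia.
split.
  case=> hi [j [hj e]]; split => // k hk.
  have [n ->] : exists n : nat, k = n.+1%:Z by exists (absz k).-1; lia_idx.
  have [J ej] : exists J : nat, j = J.+1%:Z by exists (absz j).-1; lia_idx.
  subst j; rewrite X_pos X_neg // in e.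
  by rewrite f_posE; have := conj_part_hooks_disjoint n sp (ltn0Sn J); lia.
case=> hi hk; split => //.
have [J hJ e] : exists2 J, (0 < J)%N & f_ m lam i = J%:Z - (count (fun y => J <= y)%N lam.2)%:Z.
  by apply: conj_part_hooks_cover => // n; have := hk n.+1%:Z isT; rewrite f_posE eq_sym.
exists J%:Z; split; first by lia_idx.
have -> : J%:Z = J.-1.+1%:Z by lia.
by rewrite X_pos X_neg // prednK //; lia.
Qed.

Definition negs (m : nat) : seq int := [seq K%:Z - m%:Z | K <- iota 0 m].

Lemma mem_negs m x : (x \in negs m) = negI m x.
Proof.
apply/mapP/idP => [[K hK ->]|hx]; first by move: hK; rewrite mem_iota; lia_idx.
by exists (absz (x + m%:Z)); rewrite ?mem_iota; lia_idx.
Qed.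

Lemma uniq_negs m : uniq (negs m).
Proof. by rewrite map_inj_uniq ?iota_uniq // => a b; lia. Qed.

Lemma size_negs m : size (negs m) = m.
Proof. by rewrite size_map size_iota. Qed.

Section SigmaPlus.
Variables (m S : nat) (f : int -> int).
Hypothesis df : dominant_fun m S f.

Lemma SigmaUpto_atyp_pair n p : SigmaUpto m f n p -> atyp_pair m f p.
Proof. by elim: n p => [//|n IH] p /= [/IH|[]]. Qed.

Lemma SigmaUpto_mono n n' p : (n <= n')%N -> SigmaUpto m f n p -> SigmaUpto m f n' p.
Proof.
move/subnKC <-; elim: (n' - n)%N => [|k IH]; rewrite ?addn0 // addnS.
by left; apply: IH.
Qed.

Lemma SigmaUpto_fst_inj n p q :
  SigmaUpto m f n p -> SigmaUpto m f n q -> p.1 = q.1 -> p = q.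
Proof.
elim: n p q => [//|n IH] [i j] [i' j'] /= hp hq ei; subst i'.
case: hp => [hp|[ap [dp disj_p]]]; case: hq => [hq|[aq [dq disj_q]]].
- exact: IH.
- by case: (disj_q _ hp); rewrite eqxx.
- by case: (disj_p _ hq); rewrite eqxx.
- case: ap aq => /= _ hj _ _ _ [/= _ hj' _ _ _]; rewrite /dist /= in dp dq.
  by rewrite (dominant_fun_pos_inj df hj hj') //; lia.
Qed.

Lemma SigmaPlus_fst_inj p q : SigmaPlus m f p -> SigmaPlus m f q -> p.1 = q.1 -> p = q.
Proof.
move=> [a hp] [b hq]; apply: (@SigmaUpto_fst_inj (maxn a b)).
  exact: SigmaUpto_mono (leq_maxl a b) hp.
exact: SigmaUpto_mono (leq_maxr a b) hq.
Qed.

Lemma SigmaPlus_enum_fst_in (L : seq int) : uniq L ->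
  exists2 s, uniq s & forall q, q \in s <-> SigmaPlus m f q /\ q.1 \in L.
Proof.
elim: L => [|x L IH] /=; first by exists [::] => // q; split => // -[].
case/andP => xL /IH [s us hs].
case: (classic (exists q, SigmaPlus m f q /\ q.1 = x)) => [[q [hq qx]]|no_q].
  exists (q :: s).
    by rewrite /= us andbT; apply/negP => /hs [_]; rewrite qx (negbTE xL).
  move=> q'; rewrite inE; split.
    by case/orP => [/eqP->|/hs [h1 h2]]; rewrite inE ?qx ?eqxx ?h2 ?orbT.
  case=> h1; rewrite inE => /orP[/eqP e|h2]; last by apply/orP; right; apply/hs.
  by rewrite (SigmaPlus_fst_inj h1 hq) ?eqxx // e qx.
exists s => // q'; split; first by move/hs => [h1 h2]; rewrite inE h2 orbT.
case=> h1; rewrite inE => /orP[/eqP e|h2]; last exact/hs.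
by case: no_q; exists q'.
Qed.

Lemma SigmaPlus_enum :
  exists s, [/\ uniq s, (forall q, q \in s <-> SigmaPlus m f q) & (size s <= m)%N].
Proof.
have [s us hs] := SigmaPlus_enum_fst_in (uniq_negs m).
have s_sigma q : q \in s <-> SigmaPlus m f q.
  split => [/hs []//|hq]; apply/hs; split; rewrite ?mem_negs //.
  by case: hq => n /SigmaUpto_atyp_pair [].
exists s; split => //; rewrite -(size_map fst) -(size_negs m).
apply: uniq_leq_size => [|_ /mapP [q /hs [_ h] ->] //].
by rewrite map_inj_in_uniq // => p q /s_sigma hp /s_sigma hq; apply: SigmaPlus_fst_inj.
Qed.

(* If [i] were skipped by Sigma^+, every positive [j] far enough to the right
   would be blocked at the stage [f i - f j] by a pair ending at [j]. *)
Lemma SigmaPlus_snd_far i j : atyp_index m f i ->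
  ~ (exists q, SigmaPlus m f q /\ q.1 = i) ->
  S%:Z < j -> 1 - j < f (-1) -> 1 - j < f i ->
  exists q, SigmaPlus m f q /\ q.2 = j.
Proof.
move=> [hi hi_pos] no_q hjS hj_neg hj_i.
have [_ _ _ tail] := df; have fj := tail j hjS.
have [n en] : exists n : nat, f i - f j = n.+1%:Z.
  by exists (absz (f i - f j)).-1; lia.
have ap : atyp_pair m f (i, j).
  split => //=; [lia_idx|lia|] => l hl; apply/eqP => e.
  by have := dominant_fun_neg_le df hl (_ : negI m (-1)) (_ : l <= -1); lia_idx.
have : ~ forall q, SigmaUpto m f n q -> pdisjoint (i, j) q.
  by move=> disj; apply: no_q; exists (i, j); split => //; exists n.+1; right.
move/not_all_ex_not => [q nq]; have [hq not_disj] := imply_to_and _ _ nq.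
exists q; split; first by exists n.
case: (eqVneq j q.2) => // ne; case: not_disj; split => //=.
by apply/eqP => e; apply: no_q; exists q; split; first by exists n.
Qed.

Lemma SigmaPlus_fst_onto i : atyp_index m f i -> exists q, SigmaPlus m f q /\ q.1 = i.
Proof.
move=> hi; apply: NNPP => no_q.
have [s [us s_sigma size_s]] := SigmaPlus_enum.
pose j (k : nat) := (S + absz (f (-1)) + absz (f i) + k)%N.+2%:Z.
have j_snd k : j k \in map snd s.
  have [hjS hj_neg hj_i] : [/\ S%:Z < j k, 1 - j k < f (-1) & 1 - j k < f i].
    by rewrite /j; split; lia.
  have [q [/s_sigma qs <-]] := SigmaPlus_snd_far hi no_q hjS hj_neg hj_i.
  exact: map_f.
have : (size [seq j k | k <- iota 0 m.+1] <= size (map snd s))%N.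
  apply: uniq_leq_size => [|_ /mapP [k _ ->] //].
  by rewrite map_inj_uniq ?iota_uniq // => a b; rewrite /j; lia.
by rewrite !size_map size_iota => /leq_trans/(_ size_s); rewrite ltnn.
Qed.

Lemma SigmaPlus_fstE :
  exists s, [/\ uniq s, (forall q, q \in s <-> SigmaPlus m f q),
     uniq (map fst s) & (forall x, x \in map fst s <-> atyp_index m f x)].
Proof.
have [s [us s_sigma _]] := SigmaPlus_enum.
exists s; split => //.
  by rewrite map_inj_in_uniq // => p q /s_sigma hp /s_sigma hq; apply: SigmaPlus_fst_inj.
move=> x; split; last first.
  by case/SigmaPlus_fst_onto => q [/s_sigma qs <-]; apply: map_f.
case/mapP => q /s_sigma [n /SigmaUpto_atyp_pair [hneg _ _ hpos _]] ->.
by split=> // k /hpos.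
Qed.

End SigmaPlus.

Lemma tauL i j : tau i j i = j.
Proof. by rewrite /tau eqxx. Qed.

Lemma tauR i j : tau i j j = i.
Proof. by rewrite /tau; case: eqP => [->|_]; rewrite ?eqxx. Qed.

Lemma tau_id i j k : k != i -> k != j -> tau i j k = k.
Proof. by rewrite /tau => /negbTE-> /negbTE->. Qed.

Lemma tauK i j : involutive (tau i j).
Proof.
move=> k; case: (eqVneq k i) => [->|ki]; first by rewrite tauL tauR.
by case: (eqVneq k j) => [->|kj]; rewrite ?tauR ?tauL // !tau_id.
Qed.

Lemma tau_inI m i j k : inI m i -> inI m j -> inI m k -> inI m (tau i j k).
Proof. by move=> hi hj hk; rewrite /tau; case: (k == i); case: (k == j). Qed.

Lemma bruhat_lt_eq_in_l m F F' G : (forall x, inI m x -> F' x = F x) ->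
  bruhat_lt m F G -> bruhat_lt m F' G.
Proof.
move=> eqF lt_FG; elim: lt_FG F' eqF => {F G}
  [F G [i [j [hi hj lt_ij lt_F hG]]]|F H G _ IH lt_HG _] F' eqF.
  apply: t_step; exists i, j; split; rewrite ?eqF //.
  by move=> k hk; rewrite hG // eqF // tau_inI.
exact: t_trans (IH _ eqF) lt_HG.
Qed.

Definition swap_blocks (i j : int) (n : nat) (F : int -> int) (x : int) : int :=
  if i <= x < i + n%:Z then F (x - i + j)
  else if j <= x < j + n%:Z then F (x - j + i) else F x.

Ltac swap_cases := rewrite /swap_blocks;
  repeat (case: ifP => ?); try (congr (_ _); lia); try lia.

Section SwapBlocks.
Variables (i j : int) (n : nat) (F : int -> int).
Hypothesis disj : i + n%:Z <= j.

Lemma swap_blocksL x : i <= x < i + n%:Z -> swap_blocks i j n F x = F (x - i + j).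
Proof. by move=> hx; rewrite /swap_blocks hx. Qed.

Lemma swap_blocksR x : j <= x < j + n%:Z -> swap_blocks i j n F x = F (x - j + i).
Proof. by move=> hx; swap_cases. Qed.

Lemma swap_blocks_out x : ~~ (i <= x < i + n%:Z) -> ~~ (j <= x < j + n%:Z) ->
  swap_blocks i j n F x = F x.
Proof. by move=> /negbTE hi /negbTE hj; rewrite /swap_blocks hi hj. Qed.

Lemma swap_blocksK x : swap_blocks i j n (swap_blocks i j n F) x = F x.
Proof. by swap_cases. Qed.

End SwapBlocks.

Lemma swap_blocksS i j n F x : i + n.+1%:Z <= j ->
  swap_blocks i j n.+1 F x = swap_blocks i j n F (tau (i + n%:Z) (j + n%:Z) x).
Proof.
move=> disj; case: (eqVneq x (i + n%:Z)) => [->|xi]; first by rewrite tauL; swap_cases.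
case: (eqVneq x (j + n%:Z)) => [->|xj]; first by rewrite tauR; swap_cases.
by rewrite tau_id //; move/eqP: xi; move/eqP: xj; swap_cases.
Qed.

Lemma bruhat_lt_swap_blocks m F i j n : 1 <= j ->
  (forall k : nat, (k <= n)%N -> negI m (i + k%:Z) /\ F (i + k%:Z) < F (j + k%:Z)) ->
  forall G, (forall x, inI m x -> G x = swap_blocks i j n.+1 F x) -> bruhat_lt m F G.
Proof.
move=> hj; elim: n => [|n IH] incr G hG.
  have [hi lt_ij] := incr 0%N (leqnn 0); rewrite !addr0 in hi lt_ij.
  apply: t_step; exists i, j; split => //; try lia_idx.
  by move=> x hx; rewrite hG // swap_blocksS ?addr0; [swap_cases | lia_idx].
have [hin lt_n] := incr n.+1 (leqnn _).
apply: (@t_trans _ _ _ (swap_blocks i j n.+1 F)).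
  by apply: IH => // k hk; apply: incr; apply: leqW.
apply: t_step; exists (i + n.+1%:Z), (j + n.+1%:Z); split; try lia_idx.
  by rewrite !swap_blocks_out //; lia_idx.
by move=> x hx; rewrite hG // swap_blocksS //; lia_idx.
Qed.

Lemma classic_ex_minn (P : nat -> Prop) :
  (exists n, P n) -> exists n, P n /\ forall l, (l < n)%N -> ~ P l.
Proof.
case=> n; elim/ltn_ind: n => n IH Pn.
case: (classic (exists2 l, (l < n)%N & P l)) => [[l hl Pl]|no_l]; first exact: IH hl Pl.
by exists n; split => // l hl Pl; apply: no_l; exists l.
Qed.

Section SwapRun.
Variables (m S : nat) (f : int -> int).
Hypothesis df : dominant_fun m S f.
Variables (i j : int) (r : nat).
Hypothesis i_atyp : atyp_index m f i.
Hypothesis i_max : forall i', atyp_index m f i' -> i' <= i.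
Hypothesis j_pos : 1 <= j.
Hypothesis fj_lt : f j < f i.
Hypothesis j_first : forall k, 1 <= k -> k < j -> f i < f k.
Hypothesis run : forall k : nat, (k < r)%N ->
  i + k%:Z + 1 <= -1 /\ f (i + k%:Z + 1) = f (j + k%:Z).
Hypothesis run_end : i + r%:Z + 1 <= -1 -> f (i + r%:Z + 1) != f (j + r%:Z).

Let g := swap_blocks i j r.+1 f.

Lemma run_bounds : - m%:Z <= i /\ i + r%:Z <= -1.
Proof.
have [hi _] := i_atyp; case: (posnP r) => [->|r_pos]; first by lia_idx.
have r_lt : (r.-1 < r)%N by rewrite ltn_predL.
by have [hr _] := run r_lt; lia_idx.
Qed.

Lemma swap_run_left x : i <= x <= i + r%:Z -> g x = f (x - i + j).
Proof. by move=> hx; rewrite /g swap_blocksL; have := run_bounds; lia. Qed.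

Lemma swap_run_right x : j <= x <= j + r%:Z -> g x = f (x - j + i).
Proof. by move=> hx; rewrite /g swap_blocksR; have := run_bounds; lia. Qed.

Lemma swap_run_out x : ~~ (i <= x <= i + r%:Z) -> ~~ (j <= x <= j + r%:Z) -> g x = f x.
Proof. by move=> hi hj; rewrite /g swap_blocks_out; lia. Qed.

Lemma run_lt k : (k <= r)%N -> f (j + k%:Z) < f (i + k%:Z).
Proof.
case: k => [|k] hk; first by rewrite !addr0.
have [_ e] := run hk; have -> : i + k.+1%:Z = i + k%:Z + 1 by lia.
by rewrite e; apply: (dominant_fun_pos_lt df); lia.
Qed.

(* Otherwise [i + r + 1] would be an atypical index beyond the maximal one. *)
Lemma run_end_lt : i + r%:Z + 1 <= -1 -> f (i + r%:Z + 1) < f (j + r%:Z).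
Proof.
move=> hneg; have [hi hir] := run_bounds.
case: (ltgtP (f (i + r%:Z + 1)) (f (j + r%:Z))) => // [gt|eq]; last first.
  by move: (run_end hneg); rewrite eq eqxx.
have f_next : f (i + r%:Z + 1) < f (i + r%:Z) by apply: (dominant_fun_neg_lt df); lia_idx.
have f_ir : f (i + r%:Z) <= f i by apply: (dominant_fun_neg_le df); lia_idx.
suff /i_max : atyp_index m f (i + r%:Z + 1) by lia.
split; first by lia_idx.
move=> k; rewrite /posI => hk; apply/eqP => e.
case: (ltP k j) => [k_lt|j_le]; first by have := j_first hk k_lt; lia.
case: (ltgtP k (j + r%:Z)) => [k_lt|k_gt|k_eq]; last by move: (run_end hneg); rewrite e k_eq eqxx.
  have r_lt : (r.-1 < r)%N by rewrite ltn_predL; lia.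
  have [_ e'] := run r_lt.
  rewrite (_ : i + r.-1%:Z + 1 = i + r%:Z) in e'; last by lia.
  by have := dominant_fun_pos_le df hk (_ : k <= j + r.-1%:Z); lia.
by have := dominant_fun_pos_lt df (_ : 1 <= j + r%:Z) k_gt; lia.
Qed.

Lemma swap_run_neg_step x : negI m x -> negI m (x + 1) -> g (x + 1) < g x.
Proof.
move=> hx hx1; have [hi hir] := run_bounds.
have [c|[c|[c|[c|c]]]] : x + 1 < i \/ x + 1 = i \/ (i <= x /\ x + 1 <= i + r%:Z)
    \/ x = i + r%:Z \/ i + r%:Z < x by lia.
- by rewrite !swap_run_out; try lia_idx; apply: (dominant_fun_neg_lt df); lia_idx.
- rewrite (swap_run_out (x := x)); try lia_idx; rewrite swap_run_left; try lia_idx.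
  have -> : x + 1 - i + j = j by lia.
  by have := dominant_fun_neg_lt df hx (_ : negI m i) (_ : x < i); lia_idx.
- rewrite swap_run_left; try lia; rewrite swap_run_left; try lia.
  have -> : x + 1 - i + j = x - i + j + 1 by lia.
  by apply: (dominant_fun_pos_lt df); lia.
- rewrite (swap_run_out (x := x + 1)); try lia_idx; rewrite swap_run_left; try lia_idx.
  have -> : x - i + j = j + r%:Z by lia.
  by rewrite c; apply: run_end_lt; lia_idx.
- by rewrite !swap_run_out; try lia_idx; apply: (dominant_fun_neg_lt df); lia_idx.
Qed.

Lemma swap_run_pos_step x : 1 <= x -> g (x + 1) < g x.
Proof.
move=> hx; have [hi hir] := run_bounds.
have [c|[c|[c|[c|c]]]] : x + 1 < j \/ x + 1 = j \/ (j <= x /\ x + 1 <= j + r%:Z)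
    \/ x = j + r%:Z \/ j + r%:Z < x by lia.
- by rewrite !swap_run_out; try lia; apply: (dominant_fun_pos_lt df); lia.
- rewrite (swap_run_out (x := x)); try lia; rewrite swap_run_right; try lia.
  have -> : x + 1 - j + i = i by lia.
  by apply: j_first; lia.
- rewrite swap_run_right; try lia; rewrite swap_run_right; try lia.
  have -> : x + 1 - j + i = x - j + i + 1 by lia.
  by apply: (dominant_fun_neg_lt df); lia_idx.
- rewrite (swap_run_out (x := x + 1)); try lia; rewrite swap_run_right; try lia.
  have -> : x - j + i = i + r%:Z by lia.
  have := run_lt (leqnn r); rewrite -c => lt_r.
  by apply: lt_trans lt_r; apply: (dominant_fun_pos_lt df); lia.
- by rewrite !swap_run_out; try lia; apply: (dominant_fun_pos_lt df); lia.
Qed.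

Lemma swap_run_dominant_fun : dominant_fun m (S + absz j + r + 1) g.
Proof.
have [hi hir] := run_bounds; have [_ _ pos_lb tail] := df.
split; [exact: swap_run_neg_step | exact: swap_run_pos_step | move=> x hx | move=> x hx].
  case: (boolP (j <= x <= j + r%:Z)) => c; last by rewrite swap_run_out; [exact: pos_lb | lia |].
  have [k ek] : exists k : nat, x = j + k%:Z by exists (absz (x - j)); lia.
  subst x; have k_le : (k <= r)%N by lia.
  rewrite swap_run_right // (_ : j + k%:Z - j + i = i + k%:Z); last by lia.
  by have := run_lt k_le; have := pos_lb _ hx; lia.
by rewrite swap_run_out ?tail; lia.
Qed.

Lemma swap_run_bruhat_lt : bruhat_lt m g f.
Proof.
have [hi hir] := run_bounds.
apply: (@bruhat_lt_swap_blocks m g i j r) => // [k hk|x _]; last first.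
  by rewrite swap_blocksK; lia.
split; first by lia_idx.
have -> : g (i + k%:Z) = f (j + k%:Z) by rewrite swap_run_left; [congr f | ..]; lia.
have -> : g (j + k%:Z) = f (i + k%:Z) by rewrite swap_run_right; [congr f | ..]; lia.
exact: run_lt.
Qed.

End SwapRun.

Lemma exists_max_atyp_index m (f : int -> int) : (exists i, atyp_index m f i) ->
  exists i, atyp_index m f i /\ forall i', atyp_index m f i' -> i' <= i.
Proof.
case=> i0 hi0.
have [n [hn n_min]] : exists n, atyp_index m f (- n%:Z) /\
    forall l, (l < n)%N -> ~ atyp_index m f (- l%:Z).
  apply: classic_ex_minn; exists (absz i0).
  by have -> : - (absz i0)%:Z = i0 by case: hi0; lia_idx.
exists (- n%:Z); split => // i' hi'; case: (lerP i' (- n%:Z)) => // lt_i'.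
have [hneg _] := hi'; case: (n_min (absz i')); first by lia_idx.
by have -> : - (absz i')%:Z = i' by lia_idx.
Qed.

Lemma exists_first_pos_below m S f i : dominant_fun m S f -> atyp_index m f i ->
  exists j, [/\ 1 <= j, f j < f i & forall k, 1 <= k -> k < j -> f i < f k].
Proof.
move=> [_ _ _ tail] [_ hi].
have [n [[n_pos fn_lt] n_min]] : exists n, ((0 < n)%N /\ f n%:Z < f i) /\
    forall l, (l < n)%N -> ~ ((0 < l)%N /\ f l%:Z < f i).
  apply: classic_ex_minn; exists (S + absz (f i) + 2)%N.
  by rewrite [f (Posz _)]tail; try split; lia.
exists n%:Z; split; [lia | done | ].
move=> k k_pos lt_kn; rewrite lt_neqAle hi //; case: (lerP (f i) (f k)) => // lt_k.
have ek : (absz k)%:Z = k by lia.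
by case: (n_min (absz k)); rewrite ?ek; try split; lia.
Qed.

Lemma exists_run m (f : int -> int) (i j : int) : negI m i -> exists r : nat,
  (forall k : nat, (k < r)%N -> i + k%:Z + 1 <= -1 /\ f (i + k%:Z + 1) = f (j + k%:Z)) /\
  (i + r%:Z + 1 <= -1 -> f (i + r%:Z + 1) != f (j + r%:Z)).
Proof.
move=> hi.
have : exists r : nat, ~ (i + r%:Z + 1 <= -1 /\ f (i + r%:Z + 1) = f (j + r%:Z)).
  by exists (absz i).-1; case; lia_idx.
move/classic_ex_minn => [r [r_end r_min]].
exists r; split => [k /r_min /NNPP //|hneg]; apply/eqP => e; exact: r_end.
Qed.

Lemma atyp_index_bruhat_below m S f : dominant_fun m S f -> (exists i, atyp_index m f i) ->
  exists S' g, dominant_fun m S' g /\ bruhat_lt m g f.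
Proof.
move=> df /exists_max_atyp_index [i [i_atyp i_max]].
have [j [j_pos fj_lt j_first]] := exists_first_pos_below df i_atyp.
have [r [run run_end]] := exists_run f j (proj1 i_atyp).
exists (S + absz j + r + 1)%N, (swap_blocks i j r.+1 f); split.
  exact: (swap_run_dominant_fun df i_atyp i_max j_pos fj_lt j_first run run_end).
exact: (swap_run_bruhat_lt df i_atyp j_pos fj_lt run run_end).
Qed.

Definition pos_upto (c : nat) : seq int := [seq k.+1%:Z | k <- iota 0 c].

Definition window (m c : nat) : seq int := negs m ++ pos_upto c.

Definition moment (m c : nat) (F : int -> int) : int := \sum_(k <- window m c) k * F k.

Definition cntge (x : int) (s : seq int) : nat := count (fun y => x <= y) s.

Lemma mem_pos_upto c x : (x \in pos_upto c) = (1 <= x <= c%:Z).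
Proof.
apply/mapP/idP => [[k hk ->]|hx]; first by move: hk; rewrite mem_iota; lia.
by exists (absz x).-1; rewrite ?mem_iota; lia.
Qed.

Lemma mem_window m c x : (x \in window m c) = negI m x || (1 <= x <= c%:Z).
Proof. by rewrite mem_cat mem_negs mem_pos_upto. Qed.

Lemma uniq_window m c : uniq (window m c).
Proof.
rewrite cat_uniq uniq_negs map_inj_uniq ?iota_uniq ?andbT /=; last by move=> a b; lia.
by apply/hasP => -[x]; rewrite mem_pos_upto mem_negs; lia_idx.
Qed.

Lemma window_inI m c x : x \in window m c -> inI m x.
Proof. by rewrite mem_window; lia_idx. Qed.

Lemma perm_map_tau (s : seq int) i j : uniq s -> i \in s -> j \in s ->
  perm_eq s (map (tau i j) s).
Proof.
move=> us i_s j_s; have tau_s x : x \in s -> tau i j x \in s.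
  rewrite /tau; case: eqP => // _; case: eqP => //.
apply: uniq_perm => //; first by rewrite (map_inj_uniq (can_inj (tauK i j))).
move=> x; apply/idP/mapP => [xs|[y ys ->]]; last exact: tau_s.
by exists (tau i j x); rewrite ?tauK ?tau_s.
Qed.

Lemma sub_in_count (T : eqType) (s : seq T) (a b : pred T) :
  {in s, subpred a b} -> (count a s <= count b s)%N.
Proof.
elim: s => //= y s IH sub_ab; apply: leq_add.
  by case: (a y) (sub_ab y (mem_head _ _)) => // ->.
by apply: IH => x xs; apply: sub_ab; rewrite inE xs orbT.
Qed.

Lemma moment_split m c (H : int -> int) i j :
  i \in window m c -> j \in window m c -> i != j ->
  moment m c H = i * H i + (j * H j + \sum_(k <- window m c | (k != i) && (k != j)) k * H k).
Proof.
move=> iw jw ij; rewrite /moment (bigD1_seq i) ?uniq_window //=; congr (_ + _).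
rewrite -big_filter (bigD1_seq j) ?filter_uniq ?uniq_window //=.
  by rewrite big_filter_cond.
by rewrite mem_filter eq_sym ij.
Qed.

Definition bruhat_invariants (m : nat) (F G : int -> int) : Prop :=
  (exists C : nat, forall c : nat, (C <= c)%N ->
     perm_eq (map F (window m c)) (map G (window m c)) /\ moment m c G < moment m c F) /\
  (forall x, (cntge x (map F (negs m)) <= cntge x (map G (negs m)))%N).

Lemma bruhat_step_window m F G i j c : inI m i -> inI m j -> i < j -> F i < F j ->
  (forall k, inI m k -> G k = F (tau i j k)) -> (absz j <= c)%N ->
  perm_eq (map F (window m c)) (map G (window m c)) /\ moment m c G < moment m c F.
Proof.
move=> hi hj lt_ij lt_F hG hc.
have iw : i \in window m c by rewrite mem_window; lia_idx.
have jw : j \in window m c by rewrite mem_window; lia_idx.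
split.
  have -> : map G (window m c) = map (F \o tau i j) (window m c).
    by apply/eq_in_map => k /window_inI; exact: hG.
  by rewrite map_comp; apply/perm_map/perm_map_tau; rewrite ?uniq_window.
have ij : i != j by rewrite lt_eqF.
rewrite (moment_split G iw jw ij) (moment_split F iw jw ij) !hG // tauL tauR.
set rest := (X in _ < _ + (_ + X)); rewrite (_ : \sum_(_ <- _ | _) _ = rest); first by nia.
rewrite /rest big_seq_cond [RHS]big_seq_cond; apply: eq_bigr => k /andP[kw /andP[ki kj]].
by rewrite hG ?tau_id // (window_inI kw).
Qed.

Lemma bruhat_step_cntge_negs m F G i j x : inI m i -> inI m j -> i < j -> F i < F j ->
  (forall k, inI m k -> G k = F (tau i j k)) ->
  (cntge x (map F (negs m)) <= cntge x (map G (negs m)))%N.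
Proof.
move=> hi hj lt_ij lt_F hG.
have [j_neg|[i_pos|[i_neg j_pos]]] : j < 0 \/ 0 < i \/ (i < 0 /\ 0 < j) by lia_idx.
- have iN : i \in negs m by rewrite mem_negs; lia_idx.
  have jN : j \in negs m by rewrite mem_negs; lia_idx.
  have -> : map G (negs m) = map (F \o tau i j) (negs m).
    by apply/eq_in_map => k; rewrite mem_negs => hk; apply: hG; lia_idx.
  by rewrite map_comp /cntge (permP (perm_map F (perm_map_tau (uniq_negs m) iN jN))).
- suff -> : map G (negs m) = map F (negs m) by [].
  by apply/eq_in_map => k; rewrite mem_negs => hk; rewrite hG ?tau_id //; lia_idx.
- rewrite /cntge (count_map F) (count_map G); apply: sub_in_count => k kN /=.
  have hk : negI m k by rewrite -mem_negs.
  rewrite hG; last by lia_idx.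
  case: (eqVneq k i) => [->|ki]; first by rewrite tauL => /le_lt_trans/(_ lt_F)/ltW.
  by rewrite tau_id //; apply/eqP => kj; move: hk; rewrite kj; lia_idx.
Qed.

Lemma bruhat_lt_invariants m F G : bruhat_lt m F G -> bruhat_invariants m F G.
Proof.
elim=> {F G} [F G [i [j [hi hj lt_ij lt_F hG]]]|F H G _ [[C1 h1] c1] _ [[C2 h2] c2]].
  split; last by move=> x; apply: bruhat_step_cntge_negs hG.
  by exists (absz j) => c; apply: (bruhat_step_window hi hj lt_ij lt_F hG).
split; last by move=> x; exact: leq_trans (c1 x) (c2 x).
exists (maxn C1 C2) => c hc.
have [p1 l1] := h1 c (leq_trans (leq_maxl _ _) hc).
have [p2 l2] := h2 c (leq_trans (leq_maxr _ _) hc).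
by split; [exact: perm_trans p1 p2 | exact: lt_trans l2 l1].
Qed.

Lemma cntge_cat x s1 s2 : cntge x (s1 ++ s2) = (cntge x s1 + cntge x s2)%N.
Proof. exact: count_cat. Qed.

Lemma cntge_uniq x s : uniq s -> cntge x s = (cntge (x + 1) s + (x \in s))%N.
Proof.
move=> us; rewrite -count_uniq_mem // /cntge -count_predUI.
rewrite [count (predI _ _) _](eq_count (a2 := pred0)) ?count_pred0 ?addn0 => [|y /=].
  by apply: eq_count => y /=; case: (eqVneq y x) => [->|]; lia.
by case: (eqVneq y x) => [->|]; rewrite ?andbF ?andbT; lia.
Qed.

Lemma cntge_eq_mem (s1 s2 : seq int) : uniq s1 -> uniq s2 ->
  (forall x, cntge x s1 = cntge x s2) -> s1 =i s2.
Proof.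
move=> u1 u2 e x; have := e x; rewrite (cntge_uniq x u1) (cntge_uniq x u2) e.
by move/addnI; case: (x \in s1); case: (x \in s2).
Qed.

Lemma gtr_trans (R : numDomainType) : transitive (>%R : rel R).
Proof. exact: rev_trans lt_trans. Qed.

Lemma sorted_gtr_uniq (s : seq int) : sorted >%R s -> uniq s.
Proof. by apply: sorted_uniq; [exact: gtr_trans | exact: ltxx]. Qed.

Lemma sorted_gtr_eq (s1 s2 : seq int) : sorted >%R s1 -> sorted >%R s2 ->
  (forall x, cntge x s1 = cntge x s2) -> s1 = s2.
Proof.
move=> so1 so2 e; apply: (irr_sorted_eq (@gtr_trans _) ltxx so1 so2).
by apply: cntge_eq_mem; rewrite ?sorted_gtr_uniq.
Qed.

Section CntgeSqueeze.
Variables (N1 N2 P1 P2 : seq int).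
Hypotheses (uN1 : uniq N1) (uN2 : uniq N2) (uP1 : uniq P1) (uP2 : uniq P2).
Hypothesis N1_le : forall x, (cntge x N1 <= cntge x N2)%N.
Hypothesis total : forall x, cntge x (N1 ++ P1) = cntge x (N2 ++ P2).
Hypothesis N2_sub : {subset N2 <= P2}.

Lemma cntge_squeeze_pred y : cntge y N1 = cntge y N2 -> cntge (y - 1) N1 = cntge (y - 1) N2.
Proof.
move=> e; have := total y; have := total (y - 1); have := N1_le (y - 1).
rewrite !cntge_cat !(cntge_uniq (y - 1)) // subrK e; have := @N2_sub (y - 1).
by case: (y - 1 \in N1); case: (y - 1 \in N2); case: (y - 1 \in P1); case: (y - 1 \in P2);
  move=> /=; lia.
Qed.

Lemma cntge_squeeze X : all (fun y => y < X) N2 -> forall x, cntge x N1 = cntge x N2.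
Proof.
move=> /allP N2_lt x.
have top y : X <= y -> cntge y N2 = 0%N.
  move=> hy; apply/eqP; rewrite -leqn0 leqNgt -has_count; apply/hasP => -[z /N2_lt]; lia.
case: (lerP X x) => [hx|lt_xX]; first by have := N1_le x; rewrite top //; lia.
have [n ->] : exists n : nat, x = X - n%:Z by exists (absz (X - x)); lia.
elim: n => [|n IH]; first by have := N1_le X; rewrite subr0 top //; lia.
rewrite (_ : X - n.+1%:Z = X - n%:Z - 1); last by lia.
exact: cntge_squeeze_pred.
Qed.

End CntgeSqueeze.

Lemma sorted_negs_dominant_fun m S f : dominant_fun m S f -> sorted >%R (map f (negs m)).
Proof.
move=> [neg_step _ _ _]; rewrite /negs -map_comp; apply: sorted_map_iota => k _ hk /=.
rewrite (_ : k.+1%:Z - m%:Z = k%:Z - m%:Z + 1); last by lia.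
by apply: neg_step; lia_idx.
Qed.

Lemma sorted_pos_upto_dominant_fun m S f c :
  dominant_fun m S f -> sorted >%R (map f (pos_upto c)).
Proof.
move=> [_ pos_step _ _]; rewrite /pos_upto -map_comp; apply: sorted_map_iota => k _ _ /=.
by rewrite (_ : k.+2%:Z = k.+1%:Z + 1); [apply: pos_step | lia].
Qed.

Lemma typical_negs_sub_pos m S f c : dominant_fun m S f ->
  (forall i, negI m i -> exists2 k, posI k & f k = f i) -> (S + absz (f (-1)%R) < c)%N ->
  {subset map f (negs m) <= map f (pos_upto c)}.
Proof.
move=> df typ hc x /mapP [i]; rewrite mem_negs => hi ->.
have [k hk fk] := typ i hi; apply/mapP; exists k => //; rewrite mem_pos_upto.
have f_i : f (-1) <= f i by apply: (dominant_fun_neg_le df); lia_idx.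
case: (lerP k S%:Z) => hkS; first by lia_idx.
by have [_ _ _ tail] := df; have := tail k hkS; lia_idx.
Qed.

Lemma typical_bruhat_minimal m Sf Sg f g : dominant_fun m Sf f -> dominant_fun m Sg g ->
  (forall i, negI m i -> exists2 k, posI k & f k = f i) -> ~ bruhat_lt m g f.
Proof.
move=> df dg typ /bruhat_lt_invariants [[C hC] negs_le].
pose c := (C + Sf + absz (f (-1)%R)).+1%N.
have hCc : (C <= c)%N by rewrite /c; lia.
have [perm_w lt_moment] := hC c hCc.
have [sNF sNG] := (sorted_negs_dominant_fun df, sorted_negs_dominant_fun dg).
have [sPF sPG] := (sorted_pos_upto_dominant_fun c df, sorted_pos_upto_dominant_fun c dg).
have total x : cntge x (map g (negs m) ++ map g (pos_upto c)) =
               cntge x (map f (negs m) ++ map f (pos_upto c)).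
  by rewrite -!map_cat; apply/permP.
have hc : (Sf + absz (f (-1)%R) < c)%N by rewrite /c; lia.
have bound : all (fun y => y < f (- m%:Z) + 1) (map f (negs m)).
  apply/allP => y /mapP [i]; rewrite mem_negs => hi ->.
  by have := dominant_fun_neg_le df (_ : negI m (- m%:Z)) hi; lia_idx.
have negs_eq := cntge_squeeze (sorted_gtr_uniq sNG) (sorted_gtr_uniq sNF)
  (sorted_gtr_uniq sPG) (sorted_gtr_uniq sPF) negs_le total
  (typical_negs_sub_pos df typ hc) bound.
have eq_negs := sorted_gtr_eq sNG sNF negs_eq.
have eq_pos : map g (pos_upto c) = map f (pos_upto c).
  apply: sorted_gtr_eq sPG sPF _ => x.
  by have := total x; rewrite !cntge_cat negs_eq; lia.
move: lt_moment; suff -> : moment m c f = moment m c g by rewrite ltxx.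
apply: eq_big_seq => k kw; congr (_ * _); apply/esym.
by have := congr2 cat eq_negs eq_pos; rewrite -!map_cat => /eq_in_map; apply.
Qed.

Lemma card_is0 (T : eqType) (P : T -> Prop) : card_is P 0 <-> forall x, ~ P x.
Proof.
split; first by case=> -[|a s] [_ hs] // _ x /hs.
by move=> hP; exists [::]; split => // x; split => // /hP.
Qed.

Unset Implicit Arguments.

Theorem theorem6p4 (m : nat) (lam : wt) :
  dominant m lam ->
  (exists d : nat, card_is (SigmaPlus m (f_ m lam)) d /\
                   card_is (atyp_set m (natural lam)) d) /\
  (J_typical m lam <-> typical m (natural lam)).
Proof.
move=> dom; have df := f_dominant_fun dom.
have [s [us s_sigma uf fst_atyp]] := SigmaPlus_fstE df.
split.
  exists (size s); split; first by exists s.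
  exists (map fst s); rewrite size_map; split => // x.
  by split => [/fst_atyp/(atyp_setE _ dom)|/(atyp_setE _ dom)/fst_atyp].
rewrite /typical card_is0; split => [J_typ i /(atyp_setE _ dom) hi|typ [mu [dmu lt_mu]]].
  have [S' [g [dg lt_g]]] := atyp_index_bruhat_below df (ex_intro _ i hi).
  have [mu [dmu f_mu]] := dominant_fun_weight dg.
  by apply: J_typ; exists mu; split => //; apply: bruhat_lt_eq_in_l f_mu lt_g.
apply: (typical_bruhat_minimal df (f_dominant_fun dmu) _ lt_mu) => i hi.
apply: NNPP => no_k; apply: (typ i); apply/(atyp_setE _ dom); split => // k hk.
by apply/eqP => e; apply: no_k; exists k.
Qed.
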